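(* Under the full-support assumption, for any $\eta>0$ and any OMWU initialization $\hat{\bm\pi}^{(1)}$ with positive entries, $p(\hat{\bm\pi}^{(1)})=p(\hat{\bm\pi}^{(2)})=\cdots=p(\hat{\bm\pi}^{(t)})$ for all $t\ge1$.
   Context: $\mathbb{A}$ is a finite set, $\Delta(\mathbb{A})$ the probability simplex, $\bm P\in\mathbb{R}^{\mathbb{A}\times\mathbb{A}}$ skew-symmetric. $\mathbb{M}$ is the set of Nash equilibria: ${\bm\pi}\in\Delta(\mathbb{A})$ with $\max_a(\bm P{\bm\pi})_a\le 0$. Full-support assumption: for every $a$ there exists ${\bm\pi}\in\mathbb{M}$ with $\pi_a>0$. For ${\bm\pi}$ with positive entries, $p({\bm\pi})=\arg\min_{{\bm\pi}'\in\mathbb{M}}D_{\mathrm{KL}}({\bm\pi}'\|{\bm\pi})$. OMWU: ${\bm\pi}^{(0)}=\hat{\bm\pi}^{(1)}$, and for $t\ge1$, $\pi^{(t)}_a\propto\hat\pi^{(t)}_a e^{\eta(\bm P{\bm\pi}^{(t-1)})_a}$ and $\hat\pi^{(t+1)}_a\propto\hat\pi^{(t)}_a e^{\eta(\bm P{\bm\pi}^{(t)})_a}$ (each normalized to sum to 1). *)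

From HB Require Import structures.
From mathcomp Require Import all_boot all_order all_algebra.
From mathcomp Require Import reals sequences exp.
Set Implicit Arguments. Unset Strict Implicit. Unset Printing Implicit Defensive.
Import Order.TTheory GRing.Theory Num.Theory.
Local Open Scope ring_scope.

Section Defs.
Variables (R : realType) (A : finType).

Definition matvec (P : A -> A -> R) (pi : A -> R) (a : A) : R :=
  \sum_(b : A) P a b * pi b.

Definition skew_symmetric (P : A -> A -> R) : Prop :=
  forall a b, P a b = - P b a.

Definition in_simplex (pi : A -> R) : Prop :=
  (forall a, 0 <= pi a) /\ \sum_(a : A) pi a = 1.

Definition nash_set (P : A -> A -> R) (pi : A -> R) : Prop :=
  in_simplex pi /\ \big[Order.max/0]_(a : A) matvec P pi a <= 0.
(* note: the \big[max/0] includes 0, so this is "max_a (P pi)_a <= 0". *)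

Definition full_support (P : A -> A -> R) : Prop :=
  forall a, exists pi, nash_set P pi /\ 0 < pi a.

Definition KL (pi' pi : A -> R) : R :=
  \sum_(a : A) (if pi' a == 0 then 0 else pi' a * ln (pi' a / pi a)).

(* x is an element of argmin_{pi' in M} KL(pi' || pi), i.e. x = p(pi). *)
Definition is_KL_proj (P : A -> A -> R) (pi x : A -> R) : Prop :=
  nash_set P x /\ forall y, nash_set P y -> KL x pi <= KL y pi.

Definition mw_update (eta : R) (q g : A -> R) (a : A) : R :=
  q a * expR (eta * g a) / \sum_(b : A) q b * expR (eta * g b).

(* omwu_state P eta pi1 k = (hat pi^(k+1), pi^(k)). *)
Fixpoint omwu_state (P : A -> A -> R) (eta : R) (pi1 : A -> R) (k : nat)
  : (A -> R) * (A -> R) :=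
  match k with
  | 0 => (pi1, pi1)
  | k'.+1 =>
      let (hat, prev) := omwu_state P eta pi1 k' in
      let cur := mw_update eta hat (matvec P prev) in
      (mw_update eta hat (matvec P cur), cur)
  end.

(* hat pi^(t) for t >= 1. *)
Definition omwu_hat (P : A -> A -> R) (eta : R) (pi1 : A -> R) (t : nat) : A -> R :=
  (omwu_state P eta pi1 t.-1).1.

(* pi^(t) for t >= 0. *)
Definition omwu_pi (P : A -> A -> R) (eta : R) (pi1 : A -> R) (t : nat) : A -> R :=
  (omwu_state P eta pi1 t).2.

End Defs.

From HB Require Import structures.
From mathcomp Require Import all_boot all_order all_algebra.
From mathcomp Require Import reals sequences exp.
From mathcomp Require Import ring.
Set Implicit Arguments. Unset Strict Implicit. Unset Printing Implicit Defensive.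
Import Order.TTheory GRing.Theory Num.Theory.
Local Open Scope ring_scope.

(* Under full support every Nash equilibrium x of the skew-symmetric game
   satisfies P x = 0.  Hence, for every payoff vector g = P y, the weighted
   sum sum_a x_a g_a = - sum_c y_c (P x)_c vanishes, and a multiplicative
   weights step q -> q e^{eta g} / Z changes KL(x || q) by the constant ln Z,
   the same for every x in M.  The KL projection onto M, being an argmin over
   M, is therefore unchanged by each OMWU step on hat pi. *)

Section SkewGame.
Variables (R : realType) (A : finType) (P : A -> A -> R).
Hypothesis skewP : skew_symmetric P.

Lemma sum_mul_matvecC (u v : A -> R) :
  \sum_a u a * matvec P v a = - \sum_c v c * matvec P u c.
Proof.
rewrite /matvec; under eq_bigr do rewrite mulr_sumr.
rewrite exchange_big /= -sumrN; apply: eq_bigr => c _.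
rewrite mulr_sumr -sumrN; apply: eq_bigr => a _.
by rewrite (skewP a c); ring.
Qed.

Lemma nash_matvec_le0 x : nash_set P x -> forall a, matvec P x a <= 0.
Proof. by move=> [_ xmax] a; apply: le_trans xmax; apply: le_bigmax. Qed.

Lemma nash_sum_mul_matvec_eq0 x y :
  nash_set P x -> nash_set P y -> \sum_a y a * matvec P x a = 0.
Proof.
move=> xN yN; have [[x_ge0 _] _] := xN; have [[y_ge0 _] _] := yN.
have sum_le0 (u v : A -> R) : (forall a, 0 <= u a) -> nash_set P v ->
    \sum_a u a * matvec P v a <= 0.
  move=> u_ge0 vN; rewrite -oppr_ge0 -sumrN; apply: sumr_ge0 => a _.
  by rewrite oppr_ge0 mulr_ge0_le0 // nash_matvec_le0.
apply/eqP; rewrite eq_le sum_le0 //=.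
by rewrite sum_mul_matvecC oppr_ge0 sum_le0.
Qed.

Lemma nash_matvec_eq0 x :
  full_support P -> nash_set P x -> forall b, matvec P x b = 0.
Proof.
move=> fullP xN b; have [y [yN y_b_gt0]] := fullP b.
have [[y_ge0 _] _] := yN.
have terms_ge0 a : true -> 0 <= - (y a * matvec P x a).
  by move=> _; rewrite oppr_ge0 mulr_ge0_le0 // nash_matvec_le0.
have sum_eq0 : \sum_a - (y a * matvec P x a) = 0.
  by rewrite sumrN nash_sum_mul_matvec_eq0 // oppr0.
move: (psumr_eq0P terms_ge0 sum_eq0 (i := b) isT) => /eqP.
by rewrite oppr_eq0 mulf_eq0 gt_eqF //= => /eqP.
Qed.

Lemma nash_orth_matvec x :
  full_support P -> nash_set P x -> forall y, \sum_a x a * matvec P y a = 0.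
Proof.
move=> fullP xN y; rewrite sum_mul_matvecC.
under eq_bigr do rewrite nash_matvec_eq0 // mulr0.
by rewrite big1 // oppr0.
Qed.

End SkewGame.

Section MultiplicativeWeights.
Variables (R : realType) (A : finType) (eta : R) (q g : A -> R).
Hypothesis q_gt0 : forall a, 0 < q a.

Let Z := \sum_b q b * expR (eta * g b).

Lemma mw_normalizer_gt0 (a : A) : 0 < Z.
Proof.
rewrite /Z (bigD1 a) //=; apply: ltr_wpDr; last by rewrite mulr_gt0 ?expR_gt0.
by apply: sumr_ge0 => b _; rewrite mulr_ge0 ?ltW ?expR_gt0.
Qed.

Lemma mw_update_gt0 a : 0 < mw_update eta q g a.
Proof. by rewrite divr_gt0 ?mulr_gt0 ?expR_gt0 ?(mw_normalizer_gt0 a). Qed.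

Lemma ln_div_mw_update (u : R) a : 0 < u ->
  ln (u / mw_update eta q g a) = ln (u / q a) - eta * g a + ln Z.
Proof.
move=> u_gt0; have Z_gt0 := mw_normalizer_gt0 a.
have -> : u / mw_update eta q g a = (u / q a) * ((expR (eta * g a))^-1 * Z).
  by rewrite /mw_update -/Z !invfM invrK; ring.
have e_gt0 : 0 < (expR (eta * g a))^-1 by rewrite invr_gt0 expR_gt0.
rewrite (lnM (x := u / q a)) ?posrE ?divr_gt0 ?mulr_gt0 //.
by rewrite (lnM (x := (expR _)^-1)) ?posrE // lnV ?posrE ?expR_gt0 // expRK addrA.
Qed.

Lemma KL_mw_update x :
  in_simplex x -> \sum_a x a * g a = 0 ->
  KL x (mw_update eta q g) = KL x q + ln Z.
Proof.
move=> [x_ge0 x_sum1] xg0.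
transitivity (\sum_a ((if x a == 0 then 0 else x a * ln (x a / q a))
                      - eta * (x a * g a) + x a * ln Z)).
  apply: eq_bigr => a _; case: eqP => [->|/eqP xa_neq0].
    by rewrite !mul0r mulr0 subr0 addr0.
  rewrite ln_div_mw_update ?lt_def ?xa_neq0 ?x_ge0 //; ring.
by rewrite !big_split /= sumrN -mulr_sumr xg0 -mulr_suml x_sum1 mulr0 subr0 mul1r.
Qed.

End MultiplicativeWeights.

Lemma is_KL_proj_shift (R : realType) (A : finType) (P : A -> A -> R)
    (q q' : A -> R) (c : R) :
  (forall x, nash_set P x -> KL x q' = KL x q + c) ->
  forall x, is_KL_proj P q' x <-> is_KL_proj P q x.
Proof.
move=> shift x; split=> -[xN x_min]; split=> // y yN; have := x_min y yN.
  by rewrite !shift // lerD2r.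
by rewrite !shift // lerD2r.
Qed.

Section OMWU.
Variables (R : realType) (A : finType) (P : A -> A -> R) (eta : R) (pi1 : A -> R).

Lemma omwu_hatSS t : omwu_hat P eta pi1 t.+2 =
  mw_update eta (omwu_hat P eta pi1 t.+1) (matvec P (omwu_pi P eta pi1 t.+1)).
Proof. by rewrite /omwu_hat /omwu_pi /=; case: (omwu_state P eta pi1 t). Qed.

Lemma omwu_hat_gt0 : (forall a, 0 < pi1 a) ->
  forall t a, 0 < omwu_hat P eta pi1 t.+1 a.
Proof.
move=> pi1_gt0; elim=> [|t IH] a; first exact: pi1_gt0.
by rewrite omwu_hatSS mw_update_gt0.
Qed.

End OMWU.

Theorem mainTheorem5 (R : realType) (A : finType) (P : A -> A -> R)
  (hskew : skew_symmetric P) (hfull : full_support P)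
  (eta : R) (heta : 0 < eta)
  (pi1 : A -> R) (hpos : forall a, 0 < pi1 a) (hsum : \sum_(a : A) pi1 a = 1) :
  forall t : nat, (1 <= t)%N ->
    forall x : A -> R,
      is_KL_proj P (omwu_hat P eta pi1 t) x <-> is_KL_proj P (omwu_hat P eta pi1 1) x.
Proof.
case=> [//|t] _; elim: t => [//|t IH] x; rewrite -IH omwu_hatSS.
apply: is_KL_proj_shift => y yN.
rewrite KL_mw_update //; first exact: omwu_hat_gt0.
  by case: yN.
exact (nash_orth_matvec hskew hfull yN _).
Qed.
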